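(* Let $f$ be a partitioning of the complete directed graph with loops $K_N$ (vertex set $V$, $|V|=N$, edge set $V\times V$) into $n$ partitions such that $\mathrm{ib}(f)\le 1+\varepsilon$ and $\mathrm{rf}(f)=k$. Then there exists an $\varepsilon$-balanced intersecting system on $n$ elements with cardinality $k$.
   Context: A partitioning of a directed graph $G=(V,E)$ into $n$ partitions is a function $f:E\to P$, $|P|=n$ (identify $P=[n]$). Its imbalance is $\mathrm{ib}(f)=\dfrac{\max_{l\in P}|\{e\in E: f(e)=l\}|}{|E|/n}$. For $v\in V$, $E(v)$ is the set of edges incident to $v$, $\mathrm{rf}(f,v)=|f(E(v))|$, and $\mathrm{rf}(f)=\max_{v\in V}\mathrm{rf}(f,v)$. A system on $n$ elements is a triple $(\mathcal{F},w,s)$ where $\mathcal{F}=(F_1,\dots,F_m)$ is a collection of subsets of $[n]$, $w\in[0,1]^m$ with $\sum_i w_i=1$, and $s\in[0,1]^{m\times m\times n}$ with $\sum_p s_{ijp}=1$ for all $i,j$. It is intersecting if $s_{ijp}>0$ implies $p\in F_i\cap F_j$. It is $\varepsilon$-balanced if for all $p\in[n]$, $\sum_{i=1}^m\sum_{j=1}^m w_iw_js_{ijp}\le (1+\varepsilon)/n$. Its cardinality is the size of the largest set in $\mathcal{F}$. *)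

From HB Require Import structures.
From mathcomp Require Import all_boot all_order all_algebra.
Set Implicit Arguments. Unset Strict Implicit. Unset Printing Implicit Defensive.
Import Order.TTheory GRing.Theory Num.Theory.
Local Open Scope ring_scope.

(* Complete directed graph with loops K_N: vertices 'I_N, edges 'I_N * 'I_N.
   A partitioning into n partitions: a function from edges to 'I_n. *)
Definition partitioning (N n : nat) := {ffun 'I_N * 'I_N -> 'I_n}.

Definition part_size N n (f : partitioning N n) (l : 'I_n) : nat :=
  #|[set e | f e == l]|.

Definition ib (R : realFieldType) N n (f : partitioning N n) : R :=
  ((\max_(l < n) part_size f l)%N)%:R / ((#|[set: 'I_N * 'I_N]|)%:R / n%:R).

Definition incident N (v : 'I_N) : {set 'I_N * 'I_N} :=
  [set e | (e.1 == v) || (e.2 == v)].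

Definition rf_v N n (f : partitioning N n) (v : 'I_N) : nat :=
  #|f @: incident v|.
Definition rf N n (f : partitioning N n) : nat :=
  (\max_(v < N) rf_v f v)%N.

Definition is_system (R : realFieldType) n m
  (F : 'I_m -> {set 'I_n}) (w : 'I_m -> R) (s : 'I_m -> 'I_m -> 'I_n -> R) : Prop :=
  [/\ (forall i, 0 <= w i <= 1),
      \sum_(i < m) w i = 1,
      (forall i j p, 0 <= s i j p <= 1) &
      (forall i j, \sum_(p < n) s i j p = 1)].

Definition intersecting (R : realFieldType) n m
  (F : 'I_m -> {set 'I_n}) (s : 'I_m -> 'I_m -> 'I_n -> R) : Prop :=
  forall i j p, 0 < s i j p -> p \in F i :&: F j.

Definition eps_balanced (R : realFieldType) n m (eps : R)
  (w : 'I_m -> R) (s : 'I_m -> 'I_m -> 'I_n -> R) : Prop :=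
  forall p : 'I_n,
    \sum_(i < m) \sum_(j < m) w i * w j * s i j p <= (1 + eps) / n%:R.

Definition cardinality n m (F : 'I_m -> {set 'I_n}) : nat :=
  (\max_(i < m) #|F i|)%N.

From HB Require Import structures.
From mathcomp Require Import all_boot all_order all_algebra.
Set Implicit Arguments. Unset Strict Implicit. Unset Printing Implicit Defensive.
Import Order.TTheory GRing.Theory Num.Theory.
Local Open Scope ring_scope.

(* Take the vertices as the sets of the system: vertex v carries the set
   f(E(v)) of partitions it touches, all vertices get weight 1/N, and the
   pair (u, v) sends all its mass to the partition f(u, v) of the edge
   (u, v).  That partition lies in f(E(u)) and in f(E(v)), so the system is
   intersecting; the mass received by partition p is |f^-1(p)| / N^2, which
   the imbalance bounds by (1 + eps) / n; and the largest set has size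
   rf(f). *)

Lemma sum_uniform_weight (R : realFieldType) (m : nat) :
  (0 < m)%N -> \sum_(i < m) (m%:R^-1 : R) = 1.
Proof.
by move=> m0; rewrite sumr_const card_ord -[_ *+ _]mulr_natl mulfV // pnatr_eq0 -lt0n.
Qed.

Lemma sum_indicator (R : realFieldType) (n : nat) (q : 'I_n) :
  \sum_(p < n) ((q == p)%:R : R) = 1.
Proof.
rewrite (bigD1 q) //= eqxx big1 ?addr0 // => p /negPf.
by rewrite eq_sym => ->.
Qed.

Lemma partitioning_codom_gt0 (N n : nat) (f : partitioning N n) :
  (0 < N)%N -> (0 < n)%N.
Proof. by move=> N0; case: (f (Ordinal N0, Ordinal N0)) => i /(leq_ltn_trans _)->. Qed.

Section VertexSystem.

Variables (R : realFieldType) (N n : nat) (f : partitioning N n).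
Hypothesis N_gt0 : (0 < N)%N.

Definition vertex_parts (v : 'I_N) : {set 'I_n} := f @: incident v.

Definition vertex_weight (v : 'I_N) : R := N%:R^-1.

Definition edge_part (u v : 'I_N) (p : 'I_n) : R := (f (u, v) == p)%:R.

Lemma vertex_system : is_system vertex_parts vertex_weight edge_part.
Proof.
split=> [v | | u v p | u v].
- by rewrite invr_ge0 ler0n invf_le1 ?ltr0n // ler1n.
- exact: sum_uniform_weight.
- by rewrite /edge_part; case: eqP; rewrite ?lexx ?ler01.
- exact: sum_indicator.
Qed.

Lemma vertex_system_intersecting : intersecting vertex_parts edge_part.
Proof.
move=> u v p; rewrite /edge_part; case: eqP => [<- _ | _]; last by rewrite ltxx.
by rewrite inE; apply/andP; split; apply: imset_f; rewrite inE eqxx ?orbT.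
Qed.

Lemma vertex_system_load (p : 'I_n) :
  \sum_(u < N) \sum_(v < N) vertex_weight u * vertex_weight v * edge_part u v p
  = (part_size f p)%:R / (N%:R * N%:R).
Proof.
rewrite /vertex_weight /edge_part invfM.
under eq_bigr do rewrite -mulr_sumr.
rewrite -mulr_sumr [RHS]mulrC; congr (_ * _).
rewrite pair_bigA /= /part_size -sum1_card natr_sum [RHS]big_mkcond /=.
by apply: eq_bigr => -[u v] _; rewrite inE; case: eqP.
Qed.

Lemma ibE : ib R f = (\max_(l < n) part_size f l)%N%:R * n%:R / (N%:R * N%:R).
Proof. by rewrite /ib cardsT card_prod !card_ord natrM invf_div mulrA. Qed.

Lemma part_size_le_ib (p : 'I_n) :
  (part_size f p)%:R / (N%:R * N%:R) <= ib R f / n%:R.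
Proof.
have n0 : (0 < n%:R :> R) by rewrite ltr0n (partitioning_codom_gt0 f N_gt0).
rewrite ibE mulrAC mulfK ?gt_eqF // ler_wpM2r ?invr_ge0 ?mulr_ge0 ?ler0n //.
by rewrite ler_nat; apply: leq_bigmax.
Qed.

Lemma vertex_system_balanced (eps : R) :
  ib R f <= 1 + eps -> eps_balanced eps vertex_weight edge_part.
Proof.
move=> hib p; rewrite vertex_system_load (le_trans (part_size_le_ib p)) //.
by rewrite ler_wpM2r ?invr_ge0 ?ler0n.
Qed.

Lemma cardinality_vertex_parts : cardinality vertex_parts = rf f.
Proof. by []. Qed.

End VertexSystem.

Theorem lemma2 (R : realFieldType) (N n k : nat) (eps : R)
  (f : partitioning N n) :
  (0 < N)%N ->
  ib R f <= 1 + eps ->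
  rf f = k ->
  exists (m : nat) (F : 'I_m -> {set 'I_n}) (w : 'I_m -> R)
         (s : 'I_m -> 'I_m -> 'I_n -> R),
    [/\ is_system F w s, intersecting F s, eps_balanced eps w s
      & cardinality F = k].
Proof.
move=> N0 hib <-.
exists N, (vertex_parts f), (@vertex_weight R N), (edge_part R f); split.
- exact: vertex_system.
- exact: vertex_system_intersecting.
- exact: vertex_system_balanced.
- exact: cardinality_vertex_parts.
Qed.
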